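(* Let $\mathcal{D}$ be the dumbbell: the non-uniform hypergraph on two vertices $u,v$ with edge set $\{\{u,v\},\{u\},\{v\}\}$. Then for every positive integer $k$, $\mathcal{E}_{\mathcal{D}}(k)=\bigl\lfloor\tfrac{3}{2}(k-1)\bigr\rfloor$, whereas $\mathcal{E}^*_{\mathcal{D}}(k)=(\phi-o(1))k$ as $k\to\infty$, where $\phi=\frac{1+\sqrt5}{2}$ is the golden ratio.
   Context: A (non-uniform) hypergraph has edges which are nonempty subsets of its vertex set of possibly different sizes; edges of size 1 are called loops. A multi-hypergraph may additionally have repeated (parallel) edges; a simple one has no repeated edges (but may contain edges $e\subsetneq f$). A copy of $H$ in $G$ is a sub(multi)hypergraph of $G$ isomorphic to $H$ (preserving edge sizes). $\operatorname{ex}(G,H)$ is the maximum number of edges in a sub(multi)hypergraph of $G$ (a sub-multiset of its edges) containing no copy of $H$. $\mathcal{E}_H(k):=\sup\{e(G): G \text{ a simple hypergraph with } \operatorname{ex}(G,H)<k\}$ and $\mathcal{E}^*_H(k):=\sup\{e(G): G\text{ a multi-hypergraph with }\operatorname{ex}(G,H)<k\}$, where $e(G)$ counts edges with multiplicity. Hypergraphs have no isolated vertices. *)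

From HB Require Import structures.
From mathcomp Require Import all_boot all_order all_algebra.
From mathcomp Require Import reals.
Set Implicit Arguments. Unset Strict Implicit. Unset Printing Implicit Defensive.
Import Order.TTheory GRing.Theory Num.Theory.

(* A (multi-)hypergraph on the vertex set 'I_n is given by the multiplicity
   function of its edges: G A = number of copies of the edge A. *)
Definition mhg (n : nat) := {ffun {set 'I_n} -> nat}.

Definition is_multi_hg n (G : mhg n) : Prop := G set0 = 0%N.

Definition is_simple_hg n (G : mhg n) : Prop :=
  is_multi_hg G /\ forall A, (G A <= 1)%N.

Definition nedges n (G : {set 'I_n} -> nat) : nat := (\sum_(A : {set 'I_n}) G A)%N.

(* G contains a copy of H (H without isolated vertices): an injective vertex
   map f such that each edge f(A) occurs in G at least as often as A in H. *)
Definition contains m n (H : mhg m) (G : {set 'I_n} -> nat) : bool :=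
  [exists f : {ffun 'I_m -> 'I_n},
     injectiveb f && [forall A : {set 'I_m}, (H A <= G (f @: A))%N]].

(* Multiplicities of G'
   are bounded by nedges G, so G' ranges over a finite type. *)
Definition ex m n (G : mhg n) (H : mhg m) : nat :=
  (\max_(G' : {ffun {set 'I_n} -> 'I_(nedges G).+1} |
          [forall A, (G' A <= G A)%N] && ~~ contains H (fun A => nat_of_ord (G' A)))
      nedges (fun A => nat_of_ord (G' A)))%N.

Definition dumbbell : mhg 2 :=
  [ffun A : {set 'I_2} =>
     nat_of_bool (A \in [set [set ord0]; [set ord_max]; [set ord0; ord_max]])].

Definition golden (R : realType) : R := (1 + Num.sqrt 5) / 2.

From HB Require Import structures.
From mathcomp Require Import all_boot all_order all_algebra.
From mathcomp Require Import reals.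
From mathcomp Require Import zify ring lra.
Import Order.TTheory GRing.Theory Num.Theory.
Set Implicit Arguments. Unset Strict Implicit. Unset Printing Implicit Defensive.

(* A dumbbell-free subgraph of G keeps no 2-edge both of whose vertices keep
   their loops; so ex(G, D) is the largest number [kept G S] of edges of G
   left after choosing a vertex set S and keeping the loops inside S, the
   2-edges not inside S, and every other edge.
   For simple G, an induction over the vertices finds S with
   3 kept G S >= 2 e(G), and disjoint dumbbells (plus one loop) attain 3/2.
   For multi-hypergraphs, a random S containing each vertex with probability
   x = phi - 1 keeps a loop with probability x and a 2-edge with probability
   1 - x^2 = x, so e(G) <= phi ex(G, D).  Conversely, t copies of K_n whose
   loops all have multiplicity l ~ x n satisfy
   kept G S <= t (C(n, 2) + C(l + 1, 2)), and their edge/ex ratio tends to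
   phi as n grows. *)

Definition keeps n (S A : {set 'I_n}) : bool :=
  if #|A| == 1 then A \subset S else if #|A| == 2 then ~~ (A \subset S) else true.

Definition kept n (G : mhg n) (S : {set 'I_n}) : nat := \sum_A G A * keeps S A.

Lemma mult_le_nedges n (G : mhg n) A : G A <= nedges G.
Proof. by rewrite /nedges (bigD1 A) //= leq_addr. Qed.

Lemma contains_dumbbell n (G : {set 'I_n} -> nat) (x y : 'I_n) :
  x != y -> 0 < G [set x] -> 0 < G [set y] -> 0 < G [set x; y] ->
  contains dumbbell G.
Proof.
move=> xy Gx Gy Gxy; apply/existsP.
pose f := [ffun i : 'I_2 => if i == ord0 then x else y].
have ord2 (i : 'I_2) : i = ord0 \/ i = ord_max.
  by case: i => [[|[|//]]] ?; [left | right]; apply: val_inj.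
exists f; apply/andP; split.
  apply/injectiveP => i j; rewrite !ffunE.
  by case: (ord2 i) (ord2 j) => -> [] -> //= e; rewrite e eqxx in xy.
apply/forallP => A; rewrite /dumbbell ffunE !inE.
by case: orP => [[/orP[]|] /eqP -> | //]; rewrite ?imsetU1 !imset_set1 !ffunE.
Qed.

Lemma kept_le_ex n (G : mhg n) S : kept G S <= ex G dumbbell.
Proof.
have le_G A : G A * keeps S A <= G A by rewrite mulnbr; case: ifP.
pose G' : {ffun {set 'I_n} -> 'I_(nedges G).+1} := [ffun A => inord (G A * keeps S A)].
have G'E A : nat_of_ord (G' A) = G A * keeps S A.
  by rewrite ffunE inordK // ltnS (leq_trans (le_G A) (mult_le_nedges G A)).
have -> : kept G S = nedges (fun A => nat_of_ord (G' A)).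
  by apply: eq_bigr => A _; rewrite G'E.
apply: (@leq_bigmax_cond _ _ _ G'); apply/andP; split.
  by apply/forallP => A; rewrite G'E.
apply/existsP => -[f /andP [/injectiveP finj /forallP H]].
have fne : f ord0 != f ord_max by apply/eqP => /finj.
have := H [set ord0]; have := H [set ord_max]; have := H [set ord0; ord_max].
rewrite imsetU1 !imset_set1 !G'E /dumbbell !ffunE !inE !eqxx ?orbT /=.
rewrite /keeps !cards1 cards2 fne /= subUset !sub1set.
by case: (f ord0 \in S); case: (f ord_max \in S); rewrite ?muln0.
Qed.

Lemma ex_dumbbell_le n (G : mhg n) m : (forall S, kept G S <= m) -> ex G dumbbell <= m.
Proof.
move=> le_m; apply/bigmax_leqP => G' /andP [/forallP le_G free].
pose S := [set v | 0 < G' [set v]].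
apply: leq_trans (le_m S); apply: leq_sum => A _.
rewrite /keeps; case: ifP => [/cards1P [v ->] | _].
  rewrite sub1set inE; case: ltnP => [_ | ]; rewrite ?muln1 ?le_G //.
  by rewrite leqn0 => /eqP ->.
case: ifP => [/cards2P [x [y [xy ->]]] | _]; last by rewrite muln1 le_G.
rewrite subUset !sub1set !inE.
case Gx: (0 < G' [set x]); case Gy: (0 < G' [set y]); rewrite /= ?muln1 ?le_G //.
rewrite muln0 leqn0 eqn0Ngt; apply: contraNT free => /negPn Gxy.
exact: contains_dumbbell xy Gx Gy Gxy.
Qed.

Lemma leq_sum_subpred (I : finType) (P Q : pred I) (F : I -> nat) :
  (forall i, P i -> Q i) -> \sum_(i | P i) F i <= \sum_(i | Q i) F i.
Proof.
move=> PQ; rewrite [leqLHS]big_mkcond [leqRHS]big_mkcond.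
by apply: leq_sum => i _; case: ifP => // /PQ ->.
Qed.

Section LoopsAndPairs.

Variables (n : nat) (G : mhg n).
Implicit Types (X Y A S T : {set 'I_n}) (v : 'I_n).

Definition nloops X : nat := \sum_(v in X) G [set v].

Definition npairs X : nat :=
  \sum_(A : {set 'I_n} | (#|A| == 2) && (A \subset X)) G A.

Definition pair_deg v X : nat :=
  \sum_(A : {set 'I_n} | [&& #|A| == 2, A \subset X & v \in A]) G A.

Lemma nloops_sum X :
  \sum_(A : {set 'I_n} | (#|A| == 1) && (A \subset X)) G A = nloops X.
Proof.
rewrite /nloops -(big_imset (fun A => G A) (in2W (@set1_inj _))) /=.
apply: eq_bigl => A; apply/andP/imsetP => [[/cards1P [v ->]] | [v vX ->]].
  by rewrite sub1set => vX; exists v.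
by rewrite cards1 sub1set.
Qed.

Lemma nloopsD1 v X : v \in X -> nloops X = G [set v] + nloops (X :\ v).
Proof. exact: big_setD1. Qed.

Lemma nloopsU1 v X : v \notin X -> nloops (v |: X) = G [set v] + nloops X.
Proof. by move=> vX; rewrite (nloopsD1 (setU11 v X)) setU1K. Qed.

Hypothesis loops_le1 : forall v, G [set v] <= 1.

Lemma nloops_setD_le X A : nloops X <= nloops (X :\: A) + #|A|.
Proof.
rewrite /nloops (big_setID A) /= addnC leq_add2l.
apply: leq_trans (subset_leq_card (subsetIr X A)); rewrite -sum1_card.
exact: leq_sum (fun w _ => loops_le1 w).
Qed.

Lemma npairs_sub X Y : X \subset Y -> npairs X <= npairs Y.
Proof.
move=> XY; apply: leq_sum_subpred => A /andP [-> AX]; exact: subset_trans AX XY.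
Qed.

Lemma pair_deg_sub v X Y : X \subset Y -> pair_deg v X <= pair_deg v Y.
Proof.
move=> XY; apply: leq_sum_subpred => A /and3P [-> AX ->]; by rewrite (subset_trans AX XY).
Qed.

Lemma npairsD1 v X : npairs X = npairs (X :\ v) + pair_deg v X.
Proof.
rewrite /npairs (bigID (fun A : {set 'I_n} => v \in A)) /= addnC; congr (_ + _).
  apply: eq_bigl => A; rewrite -andbA; congr (_ && _).
  by rewrite subsetD1 andbC.
by apply: eq_bigl => A; rewrite andbA.
Qed.

Lemma npairs_setD_le T v A : v \in A -> npairs (T :\: A) + pair_deg v T <= npairs T.
Proof. by move=> vA; rewrite (npairsD1 v T) leq_add2r npairs_sub // setDS // sub1set. Qed.

Lemma npairs0 : npairs set0 = 0.
Proof.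
rewrite /npairs big1 // => A /andP [A2]; rewrite subset0 => /eqP A0.
by rewrite A0 cards0 in A2.
Qed.

(* For T = setT this says 3 kept G S >= 2 nedges G (see kept_split). *)
Definition good_subset T S : bool :=
  (S \subset T) && (2 * nloops T + 3 * npairs S <= 3 * nloops S + npairs T).

Lemma good_subset_drop v T S : v \in T -> 2 * G [set v] <= pair_deg v T ->
  good_subset (T :\ v) S -> good_subset T S.
Proof.
move=> vT le_deg /andP [ST le_S]; rewrite /good_subset (subset_trans ST (subD1set T v)).
by rewrite (nloopsD1 vT) (npairsD1 v T); lia.
Qed.

Lemma good_subset_add v A T S : v \in A -> A \subset T -> G [set v] = 1 ->
  pair_deg v (v |: (T :\: A)) = 0 -> npairs (T :\: A) + 2 * #|A| <= 3 + npairs T ->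
  good_subset (T :\: A) S -> good_subset T (v |: S).
Proof.
move=> vA AT Gv deg0 le_pairs /andP [ST le_S].
have vS : v \notin S by apply: contraL vA => /(subsetP ST); rewrite inE => /andP [].
have pairs_vS : npairs (v |: S) = npairs S.
  rewrite (npairsD1 v) setU1K //; suff -> : pair_deg v (v |: S) = 0 by rewrite addn0.
  by apply/eqP; rewrite -leqn0 -deg0 pair_deg_sub ?setUS.
rewrite /good_subset pairs_vS nloopsU1 // Gv subUset sub1set (subsetP AT) //.
rewrite (subset_trans ST (subsetDl T A)) /=.
have := nloops_setD_le T A; lia.
Qed.

Lemma pair_deg_eq1 v T : pair_deg v T = 1 ->
  exists2 A : {set 'I_n}, [&& #|A| == 2, A \subset T & v \in A] &
    pair_deg v (v |: (T :\: A)) = 0.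
Proof.
move=> deg1; have [A /andP [PA GA]] :
    exists A : {set 'I_n}, [&& #|A| == 2, A \subset T & v \in A] && (0 < G A).
  apply/existsP; apply: contraTT isT => /existsPn G0.
  suff : pair_deg v T = 0 by rewrite deg1.
  rewrite /pair_deg big1 // => A PA.
  by apply/eqP; move: (G0 A); rewrite PA -eqn0Ngt.
exists A => //; case/and3P: PA => A2 AT vA.
have [w wv Aw] : exists2 w, w != v & A = [set v; w].
  case/cards2P: A2 => x [y [xy eA]]; move: vA; rewrite eA !inE.
  by case/orP => /eqP ->; [exists y; rewrite // eq_sym | exists x; rewrite // setUC].
suff : pair_deg v (v |: (T :\: A)) + G A <= pair_deg v T by lia.
rewrite [leqRHS](bigD1 A) /=; last by rewrite A2 AT vA.
rewrite addnC leq_add2l; apply: leq_sum_subpred => B /and3P [-> BT ->].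
rewrite andbT (subset_trans BT) ?subUset ?sub1set ?(subsetP AT) ?subsetDl //=.
apply: contraTneq BT => ->; rewrite Aw subUset !sub1set !inE eqxx /=.
by rewrite eqxx orbT /= orbF.
Qed.

(* Pick v in T.  If v lies in at least twice as many 2-edges of T as loops,
   drop v; otherwise v has one loop and at most one 2-edge {v, w} in T:
   put v in S and recurse on T minus v and w. *)
Lemma exists_good_subset T : exists S, good_subset T S.
Proof.
elim: {T}_.+1 {-2}T (ltnSn #|T|) => // m IH T le_T.
have [T0 | [v vT]] := set_0Vmem T.
  by exists T; rewrite /good_subset T0 subxx /nloops big_set0 npairs0.
have lt_T A : v \in A -> #|T :\: A| < m.
  move=> vA; suff : #|T :\: A| < #|T| by lia.
  apply: proper_card; apply/properP.
  by split; [exact: subsetDl | exists v; rewrite // inE vA].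
have [le_deg | lt_deg] := leqP (2 * G [set v]) (pair_deg v T).
  have [S goodS] := IH _ (lt_T [set v] (set11 v)).
  by exists S; apply: good_subset_drop goodS.
have Gv : G [set v] = 1.
  by move: lt_deg (loops_le1 v); case: (G [set v]) => [|[|]].
have [deg0 | deg1] : pair_deg v T = 0 \/ pair_deg v T = 1 by lia.
  have [S goodS] := IH _ (lt_T [set v] (set11 v)).
  exists (v |: S); apply: good_subset_add goodS; rewrite ?set11 ?sub1set ?setD1K //.
  have := npairs_setD_le T (set11 v); rewrite cards1; lia.
have [A /and3P [A2 AT vA] degA] := pair_deg_eq1 deg1.
have [S goodS] := IH _ (lt_T A vA).
exists (v |: S); apply: good_subset_add goodS => //.
have := npairs_setD_le T vA; rewrite deg1 (eqP A2); lia.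
Qed.

Definition nothers : nat := \sum_(A : {set 'I_n} | (#|A| != 1) && (#|A| != 2)) G A.

Lemma kept_split S : kept G S + npairs S = nloops S + npairs setT + nothers.
Proof.
rewrite -nloops_sum /kept /nothers /npairs !(big_mkcond (fun A => _ && _)) /=.
rewrite -!big_split /=; apply: eq_bigr => A _; rewrite /keeps subsetT.
by case: (#|A| =P 1) => [-> | _]; case: (#|A| == 2); case: (A \subset S);
  rewrite /= ?addn0 ?add0n ?muln1 ?muln0.
Qed.

Lemma nedges_split : nedges G = nloops setT + npairs setT + nothers.
Proof.
rewrite -nloops_sum /nedges /nothers /npairs !(big_mkcond (fun A => _ && _)) /=.
rewrite -!big_split /=; apply: eq_bigr => A _; rewrite subsetT.
by case: (#|A| =P 1) => [-> | _] //=; case: (#|A| == 2); rewrite /= ?addn0.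
Qed.

Lemma exists_kept_ge : exists S, 2 * nedges G <= 3 * kept G S.
Proof.
have [S /andP [_ goodS]] := exists_good_subset setT.
exists S; have := kept_split S; have := npairs_sub (subsetT S).
rewrite nedges_split; lia.
Qed.

End LoopsAndPairs.

Lemma simple_ex_dumbbell_ge n (G : mhg n) :
  is_simple_hg G -> 2 * nedges G <= 3 * ex G dumbbell.
Proof.
case=> _ G_le1; have [S le_S] := exists_kept_ge (fun v => G_le1 [set v]).
by rewrite (leq_trans le_S) // leq_mul2l kept_le_ex.
Qed.

Lemma sum_nat_pred (T : finType) (P : pred T) : \sum_(i : T) (P i : nat) = #|P|.
Proof.
rewrite -sum1_card [RHS]big_mkcond; apply: eq_bigr => i _.
by rewrite unfold_in; case: (P i).
Qed.

Lemma card_sets_of_size n k : #|[pred A : {set 'I_n} | #|A| == k]| = 'C(n, k).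
Proof.
by rewrite -[n in 'C(n, _)]card_ord -card_draws; apply: eq_card => A; rewrite !inE.
Qed.

Lemma card_subsets_of_size n (S : {set 'I_n}) k :
  #|[pred A : {set 'I_n} | (A \subset S) && (#|A| == k)]| = 'C(#|S|, k).
Proof. by rewrite -cards_draws; apply: eq_card => A; rewrite !inE. Qed.

Section Matching.

Variable N : nat.
Implicit Types (i : 'I_(N %/ 2)) (v : 'I_N) (A S : {set 'I_N}).

Lemma double_lt i : 2 * i < N.
Proof. have := ltn_ord i; lia. Qed.

Lemma double_addn1_lt i : 2 * i + 1 < N.
Proof. have := ltn_ord i; lia. Qed.

Definition matching_pair i : {set 'I_N} :=
  [set Ordinal (double_lt i); Ordinal (double_addn1_lt i)].

Lemma mem_matching_pair i v : v \in matching_pair i -> v %/ 2 = i.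
Proof. by rewrite !inE => /orP [] /eqP -> /=; lia. Qed.

Lemma matching_pair_inj : injective matching_pair.
Proof.
move=> i j eq_ij; have : Ordinal (double_lt i) \in matching_pair j by rewrite -eq_ij setU11.
by move/mem_matching_pair => /= ij; apply: val_inj => /=; lia.
Qed.

Lemma card_matching_pair i : #|matching_pair i| = 2.
Proof. by rewrite cards2; case: eqP => // /(congr1 val) /=; lia. Qed.

Lemma matching_pairs_le1 v : \sum_i (v \in matching_pair i : nat) <= 1.
Proof.
rewrite (sum_nat_pred (fun i => v \in matching_pair i)).
apply/card_le1_eqP => i j; rewrite !unfold_in.
move=> /mem_matching_pair vi /mem_matching_pair vj.
by apply: val_inj => /=; rewrite -vi -vj.
Qed.

Definition matching_pairs : {set {set 'I_N}} := [set matching_pair i | i in 'I_(N %/ 2)].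

Definition matching_hg : mhg N :=
  [ffun A : {set 'I_N} => nat_of_bool ((#|A| == 1) || (A \in matching_pairs))].

Lemma matching_hgE A :
  matching_hg A = (#|A| == 1) + (A \in matching_pairs).
Proof.
rewrite ffunE; case: eqP => A1 //=; case: imsetP => // -[i _ eA].
by move: A1; rewrite eA card_matching_pair.
Qed.

Lemma matching_hg_simple : is_simple_hg matching_hg.
Proof.
split=> [|A]; last by rewrite ffunE; case: (_ || _).
rewrite /is_multi_hg matching_hgE cards0; case: imsetP => // -[i _].
by move/(congr1 (fun A => #|A|)); rewrite card_matching_pair cards0.
Qed.

Lemma nedges_matching_hg : nedges matching_hg = N + N %/ 2.
Proof.
rewrite /nedges (eq_bigr _ (fun A _ => matching_hgE A)) big_split /=.
rewrite (sum_nat_pred (fun A : {set 'I_N} => #|A| == 1)).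
rewrite (sum_nat_pred (mem matching_pairs)).
rewrite card_imset ?card_ord; last exact: matching_pair_inj.
by congr (_ + _); rewrite -[RHS]bin1 -card_sets_of_size.
Qed.

Lemma kept_matching_hg_le S : kept matching_hg S <= N.
Proof.
rewrite /kept (eq_bigr (fun A =>
    ((A \subset S) && (#|A| == 1)) + (A \in matching_pairs) * keeps S A)); last first.
  move=> A _; rewrite matching_hgE mulnDl; congr (_ + _).
  by rewrite /keeps; case: (#|A| == 1); rewrite ?andbT ?andbF ?mul1n ?mul0n.
rewrite big_split /= sum_nat_pred.
apply: (@leq_trans (#|S| + #|~: S|)); last by rewrite cardsC card_ord.
apply: leq_add.
  by rewrite -[leqRHS]bin1 -card_subsets_of_size.
rewrite (eq_bigr (fun A => if A \in matching_pairs then keeps S A : nat else 0));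
  last first.
  by move=> A _; case: (_ \in _); rewrite ?mul1n.
rewrite -big_mkcond big_imset /=; last by move=> i j _ _; apply: matching_pair_inj.
apply: (@leq_trans (\sum_i \sum_(v in ~: S) (v \in matching_pair i : nat))).
  apply: leq_sum => i _; rewrite /keeps card_matching_pair /=.
  case: (boolP (matching_pair i \subset S)) => // /subsetPn [v vP vS].
  by rewrite (bigD1 v) /= ?vP ?inE.
rewrite exchange_big /= -sum1_card; apply: leq_sum => v _; exact: matching_pairs_le1.
Qed.

End Matching.

Lemma double_bin2 m : 2 * 'C(m, 2) = m * m.-1.
Proof. by rewrite (mul_bin_left m 1) bin1 subn1 mulnC. Qed.

Lemma muln_le_bin2 l s : l * s <= 'C(s, 2) + 'C(l.+1, 2).
Proof.
rewrite -(leq_pmul2l (isT : 0 < 2)) mulnDr !double_bin2 /=.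
case: (leqP s l) => [le_sl | lt_ls]; first nia.
have [d ->] : exists d, s = (l + d).+1 by exists (s - l.+1); lia.
nia.
Qed.

Section WeightedClique.

Variables n l t : nat.

Definition weighted_clique : mhg n :=
  [ffun A : {set 'I_n} => t * (if #|A| == 1 then l else if #|A| == 2 then 1 else 0)].

Lemma weighted_clique_multi : is_multi_hg weighted_clique.
Proof. by rewrite /is_multi_hg ffunE cards0 muln0. Qed.

Lemma nedges_weighted_clique : nedges weighted_clique = t * (l * n + 'C(n, 2)).
Proof.
rewrite /nedges (eq_bigr (fun A : {set 'I_n} => t * (l * (#|A| == 1) + (#|A| == 2))));
  last first.
  move=> A _; rewrite ffunE; case: eqP => [-> | _] /=; first by rewrite muln1 addn0.
  by rewrite muln0; case: (_ == 2).
rewrite -big_distrr big_split -big_distrr /= !sum_nat_pred.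
congr (t * (l * _ + _)).
  by rewrite -[RHS]bin1 -card_sets_of_size.
by rewrite -card_sets_of_size.
Qed.

Lemma kept_weighted_clique S :
  kept weighted_clique S + t * 'C(#|S|, 2) = t * (l * #|S| + 'C(n, 2)).
Proof.
have sumE : \sum_(A : {set 'I_n})
         (weighted_clique A * keeps S A + t * ((A \subset S) && (#|A| == 2))) =
       \sum_(A : {set 'I_n}) t * (l * ((A \subset S) && (#|A| == 1)) + (#|A| == 2)).
  apply: eq_bigr => A _; rewrite ffunE /keeps -mulnA -mulnDr; congr (t * _).
  by case: (#|A| =P 1) => [-> | _] /=; [|case: (#|A| == 2)]; case: (A \subset S);
    rewrite /= ?muln1 ?muln0 ?mul0n ?addn0.
rewrite big_split -!big_distrr big_split -big_distrr /= !sum_nat_pred in sumE.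
rewrite /kept -(card_subsets_of_size S 2) -[#|S|]bin1 -card_subsets_of_size.
by rewrite -card_sets_of_size; exact: sumE.
Qed.

Lemma kept_weighted_clique_le S :
  kept weighted_clique S <= t * ('C(n, 2) + 'C(l.+1, 2)).
Proof.
have := kept_weighted_clique S; have := leq_mul (leqnn t) (muln_le_bin2 l #|S|).
rewrite !mulnDr; lia.
Qed.

End WeightedClique.

Local Open Scope ring_scope.

Section RandomSubset.

Variables (R : realFieldType) (n : nat) (p : R).
Implicit Types (A S : {set 'I_n}).

(* The probability of S when each vertex lies in S independently with
   probability p. *)
Definition subset_weight S : R := \prod_i (if i \in S then p else 1 - p).

Lemma sum_subset_weight_sub A : \sum_S subset_weight S * (A \subset S)%:R = p ^+ #|A|.
Proof.
pose F (i : 'I_n) (b : bool) : R := (if b then p else 1 - p) * (if i \in A then b%:R else 1).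
have -> : \sum_S subset_weight S * (A \subset S)%:R =
          \sum_(f : {ffun 'I_n -> bool}) \prod_i F i (f i).
  rewrite (reindex (fun f : {ffun 'I_n -> bool} => [set i | f i])) /=; last first.
    exists (fun S : {set 'I_n} => [ffun i => i \in S]) => [f _ | S _].
      by apply/ffunP => i; rewrite ffunE inE.
    by apply/setP => i; rewrite inE ffunE.
  apply: eq_bigr => f _; rewrite /F big_split /=; congr (_ * _).
    by apply: eq_bigr => i _; rewrite inE.
  case: (boolP (A \subset _)) => [/subsetP sA | /subsetPn [i iA niS]].
    by rewrite big1 // => i _; case: ifP => // /sA; rewrite inE => ->.
  apply/esym/eqP/prodf_eq0; exists i => //.
  by rewrite iA; move: niS; rewrite inE => /negbTE ->.
rewrite -bigA_distr_bigA /= -prodr_const [RHS]big_mkcond /=.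
apply: eq_bigr => i _; rewrite big_bool /F /=.
by case: (i \in A); rewrite ?mulr1 ?mulr0 ?addr0 // addrC subrK.
Qed.

Lemma sum_subset_weight : \sum_S subset_weight S = 1.
Proof.
rewrite -(expr0 p) -(cards0 'I_n) -sum_subset_weight_sub.
by apply: eq_bigr => S _; rewrite sub0set mulr1.
Qed.

Hypothesis p01 : 0 <= p <= 1.

Lemma subset_weight_ge0 S : 0 <= subset_weight S.
Proof.
case/andP: p01 => p0 p1; apply: prodr_ge0 => i _.
by case: ifP => // _; rewrite subr_ge0.
Qed.

Lemma keeps_expectation_ge (c : R) A : c <= p -> c <= 1 - p ^+ 2 ->
  c <= \sum_S subset_weight S * (keeps S A)%:R.
Proof.
move=> c_p c_p2; rewrite /keeps; case: (#|A| =P 1) => [A1 | _].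
  by rewrite sum_subset_weight_sub A1 expr1.
case: (#|A| =P 2) => [A2 | _].
  rewrite (eq_bigr (fun S => subset_weight S - subset_weight S * (A \subset S)%:R));
    last first.
    by move=> S _; case: (A \subset S); rewrite ?mulr1 ?mulr0 ?subr0 ?subrr.
  by rewrite sumrB sum_subset_weight sum_subset_weight_sub A2; lra.
under eq_bigr do rewrite mulr1.
by rewrite sum_subset_weight; nra.
Qed.

Lemma ex_dumbbell_ge_average (c : R) (G : mhg n) : c <= p -> c <= 1 - p ^+ 2 ->
  c * (nedges G)%:R <= (ex G dumbbell)%:R.
Proof.
move=> c_p c_p2; apply: (@le_trans _ _ (\sum_S subset_weight S * (kept G S)%:R)).
  rewrite /nedges natr_sum mulr_sumr.
  under [X in _ <= X]eq_bigr => S _ do rewrite /kept natr_sum mulr_sumr.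
  rewrite exchange_big /=; apply: ler_sum => A _.
  apply: (@le_trans _ _ ((G A)%:R * \sum_S subset_weight S * (keeps S A)%:R)).
    by rewrite mulrC ler_wpM2l // keeps_expectation_ge.
  rewrite mulr_sumr le_eqVlt; apply/orP; left.
  by apply/eqP/eq_bigr => S _; rewrite natrM mulrCA.
apply: (@le_trans _ _ (\sum_S subset_weight S * (ex G dumbbell)%:R)).
  by apply: ler_sum => S _; rewrite ler_wpM2l ?subset_weight_ge0 // ler_nat kept_le_ex.
by rewrite -mulr_suml sum_subset_weight mul1r.
Qed.

End RandomSubset.

Section Golden.

Variable R : realType.

Lemma golden_sqr : golden R ^+ 2 = golden R + 1.
Proof.
rewrite /golden; set s := Num.sqrt 5; have s5 : s ^+ 2 = 5 by rewrite sqr_sqrtr.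
have -> : ((1 + s) / 2) ^+ 2 = (1 + 2 * s + s ^+ 2) / 4 by field.
by rewrite s5; field.
Qed.

Lemma golden_bounds : 1 < golden R < 2.
Proof.
have s5 : Num.sqrt 5 ^+ 2 = 5 :> R by rewrite sqr_sqrtr.
have s0 : 0 <= Num.sqrt 5 :> R by apply: sqrtr_ge0.
by apply/andP; split; rewrite /golden; nra.
Qed.

Lemma nedges_le_golden_ex n (G : mhg n) :
  (nedges G)%:R <= golden R * (ex G dumbbell)%:R.
Proof.
have gg := golden_sqr; have /andP [g1 g2] := golden_bounds.
set g := golden R in gg g1 g2 *.
have x01 : 0 <= g - 1 <= 1 by apply/andP; split; lra.
have x_x2 : g - 1 <= 1 - (g - 1) ^+ 2 by nra.
have avg := ex_dumbbell_ge_average x01 G (lexx _) x_x2.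
have gx : g * (g - 1) = 1 by rewrite mulrBr mulr1 -expr2 gg; ring.
have -> : (nedges G)%:R = g * ((g - 1) * (nedges G)%:R) :> R by rewrite mulrA gx mul1r.
by rewrite ler_wpM2l //; lra.
Qed.

End Golden.

(* With L = x N the ratio tends to (2 x + 1) / (1 + x^2) = 1 + x; the
   rounding of L and the lower order terms cost at most 2 N, which e absorbs. *)
Lemma clique_ratio_ineq (R : realFieldType) (x e N L : R) :
  x ^+ 2 + x = 1 -> 0 < x -> 0 < e -> 2 <= e * (N - 1) ->
  0 <= L <= x * N -> x * N < L + 1 ->
  (1 + x - e) * (N * (N - 1) + L * (L + 1)) <= 2 * L * N + N * (N - 1).
Proof.
move=> xx x0 e0 eN /andP [L0 LxN] xNL.
have x1 : x < 1 by nra.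
have N1 : 1 < N by nra.
set d := x * N - L.
have gap : (1 + x) * (N * (N - 1) + L * (L + 1)) - (2 * L * N + N * (N - 1)) =
    (1 + x) * d ^+ 2 + (1 + x) * L - x * N + (x ^+ 2 + x - 1) * (2 * N * L - x * N ^+ 2).
  by rewrite /d; ring.
rewrite xx subrr mul0r addr0 in gap.
have d01 : 0 <= d < 1 by rewrite /d; apply/andP; split; lra.
have d2 : (1 + x) * d ^+ 2 <= 2 by case/andP: d01 => d0 d1; nra.
have xL : (1 + x) * L <= N.
  have xN : (1 + x) * (x * N) = N.
    by transitivity ((x ^+ 2 + x) * N); [ring | rewrite xx mul1r].
  by rewrite -[leRHS]xN ler_wpM2l //; lra.
have eN2 : 2 * N <= e * (N * (N - 1) + L * (L + 1)) by nra.
nra.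
Qed.

Lemma natr_double_bin2 (R : pzRingType) m :
  2 * ('C(m, 2))%:R = m%:R * (m%:R - 1) :> R.
Proof.
rewrite -natrM double_bin2 natrM; case: m => [|m]; first by rewrite !mul0r.
by rewrite -natr1 addrK.
Qed.

Lemma golden_clique_ratio (R : realType) (eps : R) : 0 < eps ->
  exists n l : nat, (1 < n)%N /\
    (golden R - eps) * ('C(n, 2) + 'C(l.+1, 2))%:R <= (l * n + 'C(n, 2))%:R.
Proof.
move=> eps0; have /andP [g1 _] := golden_bounds R.
set x := golden R - 1; have x0 : 0 < x by rewrite /x; lra.
have xx : x ^+ 2 + x = 1 by rewrite /x; have := golden_sqr R; nra.
pose k := Num.truncn (2 / eps); pose l := Num.truncn (x * k.+2%:R).
exists k.+2, l; split => //.
have eN : 2 <= eps * (k.+2%:R - 1).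
  have lt_k := truncnS_gt (2 / eps); rewrite -/k in lt_k.
  have div_eps : 2 / eps * eps = 2 by rewrite divfK // gt_eqF.
  rewrite -[k.+2%:R]natr1 addrK; nra.
have L_le : 0 <= (l%:R : R) <= x * k.+2%:R by rewrite ler0n truncn_le mulr_ge0 // ltW.
have L_gt : x * k.+2%:R < l%:R + 1 by rewrite natr1 truncnS_gt.
have := clique_ratio_ineq xx x0 eps0 eN L_le L_gt.
have B2 : k.+2%:R * (k.+2%:R - 1) + l%:R * (l%:R + 1) =
          2 * ('C(k.+2, 2) + 'C(l.+1, 2))%:R :> R.
  by rewrite natrD [RHS]mulrDr !natr_double_bin2 -!natr1; ring.
have M2 : 2 * l%:R * k.+2%:R + k.+2%:R * (k.+2%:R - 1) =
          2 * (l * k.+2 + 'C(k.+2, 2))%:R :> R.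
  by rewrite natrD [RHS]mulrDr natr_double_bin2 natrM; ring.
rewrite B2 M2 (_ : golden R = 1 + x); last by rewrite /x; ring.
nra.
Qed.

Lemma scaled_ratio_le (R : realFieldType) (c e B M t k : R) :
  0 < e -> c <= 2 -> 0 <= B -> 0 <= t -> 0 <= M -> c * B <= M -> k <= t * B + B ->
  4 * B <= e * k -> (c - e / 2) * k <= t * M.
Proof.
move=> e0 c2 B0 t0 M0 cBM k_le Bk.
have k0 : 0 <= k by nra.
have tM0 : 0 <= t * M by rewrite mulr_ge0.
have [c_le | c_gt] := lerP c (e / 2); first by nra.
have : t * (c * B) <= t * M by rewrite ler_wpM2l.
nra.
Qed.

Lemma exists_multiple_below B k : (0 < B)%N -> (0 < k)%N ->
  exists t, (t * B < k <= t * B + B)%N.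
Proof.
move=> B0 k0; exists (k.-1 %/ B)%N; apply/andP; split.
  by rewrite (leq_ltn_trans (leq_trunc_div _ _)) // prednK.
by have := divn_eq k.-1 B; have := ltn_pmod k.-1 B0; lia.
Qed.

Lemma multi_ex_dumbbell_extremal (R : realType) (eps : R) : 0 < eps ->
  exists K : nat, forall k : nat, (K <= k)%N ->
    exists n (G : mhg n), is_multi_hg G /\ (ex G dumbbell < k)%N /\
      (golden R - eps) * k%:R <= (nedges G)%:R.
Proof.
move=> eps0; have [n [l [n1 ratio]]] := golden_clique_ratio (divr_gt0 eps0 (ltr0n R 2)).
set B := ('C(n, 2) + 'C(l.+1, 2))%N in ratio; set M := (l * n + 'C(n, 2))%N in ratio.
have B0 : (0 < B)%N by rewrite addn_gt0 bin_gt0 n1.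
exists (Num.truncn (4 * B%:R / eps)).+1 => k K_k.
have [t /andP [tB_k k_tB]] := exists_multiple_below B0 (leq_trans (ltn0Sn _) K_k).
exists n, (weighted_clique n l t); split; first exact: weighted_clique_multi.
split; first exact: leq_ltn_trans (ex_dumbbell_le (@kept_weighted_clique_le n l t)) tB_k.
have -> : golden R - eps = golden R - eps / 2 - eps / 2 by field.
rewrite nedges_weighted_clique natrM.
apply: (scaled_ratio_le (B := B%:R)) => //.
- by have /andP [_ g2] := golden_bounds R; lra.
- by rewrite -natrM -natrD ler_nat.
- have lt_k := truncnS_gt (4 * B%:R / eps).
  have div_eps : 4 * B%:R / eps * eps = 4 * B%:R by rewrite divfK // gt_eqF.
  have : (Num.truncn (4 * B%:R / eps)).+1%:R <= k%:R :> R by rewrite ler_nat.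
  nra.
Qed.

Theorem theorem1p5 :
  (* E_D(k) = floor(3(k-1)/2): the supremum is an upper bound and is attained *)
  (forall k : nat, (0 < k)%N ->
     (forall n (G : mhg n), is_simple_hg G -> (ex G dumbbell < k)%N ->
        (nedges G <= (3 * (k - 1)) %/ 2)%N) /\
     (exists n (G : mhg n), is_simple_hg G /\ (ex G dumbbell < k)%N /\
        nedges G = ((3 * (k - 1)) %/ 2)%N)) /\
  (* E*_D(k) = (phi - o(1)) k, i.e. E*_D(k)/k -> phi *)
  (forall (R : realType) (eps : R), 0 < eps ->
     exists K : nat, forall k : nat, (K <= k)%N ->
       (forall n (G : mhg n), is_multi_hg G -> (ex G dumbbell < k)%N ->
          (nedges G)%:R <= (golden R + eps) * k%:R) /\
       (exists n (G : mhg n), is_multi_hg G /\ (ex G dumbbell < k)%N /\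
          (golden R - eps) * k%:R <= (nedges G)%:R)).
Proof.
split=> [k k0 | R eps eps0].
  split=> [n G simpleG ex_k | ]; first by have := simple_ex_dumbbell_ge simpleG; lia.
  exists (k - 1)%N, (matching_hg (k - 1)); split; first exact: matching_hg_simple.
  split; last by rewrite nedges_matching_hg; lia.
  by have := ex_dumbbell_le (@kept_matching_hg_le (k - 1)); lia.
have [K extremal] := multi_ex_dumbbell_extremal eps0.
exists K => k K_k; split=> [n G _ ex_k | ]; last exact: extremal.
have ex_k' : (ex G dumbbell)%:R <= k%:R :> R by rewrite ler_nat ltnW.
have /andP [g1 _] := golden_bounds R.
apply: (le_trans (nedges_le_golden_ex R G)); rewrite mulrDl.
apply: le_trans (ler_wpM2l (ltW (lt_trans ltr01 g1)) ex_k') _.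
by rewrite lerDl mulr_ge0 // ltW.
Qed.
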